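(* Let $G=(X,\Sigma,\longrightarrow,X_0)$ be a plant and $R=(Z,\Sigma,\longrightarrow,Z_0)$ a specification. If $S=(Y,\Sigma,\longrightarrow,Y_0)$ is a $\Sigma_{uc}$-admissible supervisor and $\Phi$ is a cc-simulation from $S\|G$ to $R$, then $E(\Phi)=\{\theta_y:y\in Y\}$, where $\theta_y=\{(x,z):((y,x),z)\in\Phi\text{ and }(y,x)\text{ is reachable in }S\|G\}$, is a $\Sigma_{ucr}$-controllability set from $G$ to $R$.
   Context: An automaton is a 4-tuple $A=(Q,\Sigma,\longrightarrow,Q_0)$ with state set $Q$, finite event set $\Sigma$, ${\longrightarrow}\subseteq Q\times\Sigma\times Q$ and $\emptyset\neq Q_0\subseteq Q$. Write $q\xrightarrow{\sigma}q'$ for $(q,\sigma,q')\in{\longrightarrow}$, $q\xrightarrow{\sigma}$ if some such $q'$ exists; extend to strings. A state is reachable if it is reached from an initial state by some string. Events are partitioned into uncontrollable $\Sigma_{uc}$ and controllable $\Sigma_c$; $\Sigma_r\subseteq\Sigma$ is a fixed set of required events. $S\|G=(Y\times X,\Sigma,\longrightarrow,Y_0\times X_0)$ with $(y,x)\xrightarrow{\sigma}(y',x')$ iff $y\xrightarrow{\sigma}y'$ and $x\xrightarrow{\sigma}x'$. $S$ is $\Sigma_{uc}$-admissible w.r.t. $G$ if for every reachable $(y,x)$ of $S\|G$ and $\sigma\in\Sigma_{uc}$, $x\xrightarrow{\sigma}$ implies $(y,x)\xrightarrow{\sigma}$. For automata $A_1,A_2$ with state sets $Q_1,Q_2$ and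 initial sets $Q_{01},Q_{02}$, $\Phi\subseteq Q_1\times Q_2$ is a cc-simulation if (initial state) every $q_0\in Q_{01}$ has $p_0\in Q_{02}$ with $(q_0,p_0)\in\Phi$; (forward) for $(q,p)\in\Phi$, $\sigma\in\Sigma$, $q\xrightarrow{\sigma}q'$ there is $p'$ with $p\xrightarrow{\sigma}p'$, $(q',p')\in\Phi$; ($\Sigma_r$-backward) for $(q,p)\in\Phi$, $\sigma\in\Sigma_r$, $p\xrightarrow{\sigma}p'$ there is $q'$ with $q\xrightarrow{\sigma}q'$, $(q',p')\in\Phi$. For $W,W'\subseteq X\times Z$: $\mathit{match}_{G,R}(W,\sigma,W')$ iff for all $(x,z)\in W$ and $x\xrightarrow{\sigma}x'$ there is $z'$ with $z\xrightarrow{\sigma}z'$ and $(x',z')\in W'$. $E\subseteq\wp(X\times Z)$ is a $\Sigma_{ucr}$-controllability set from $G$ to $R$ if: (istate) some $W_0\in E$ satisfies $\forall x_0\in X_0\,\exists z_0\in Z_0\,((x_0,z_0)\in W_0)$; (a) for every $W\in E$, $\sigma\in\Sigma_{uc}$ there is $W'\in E$ with $\mathit{match}_{G,R}(W,\sigma,W')$; (b) for every $W\in E$, $(x,z)\in W$, $\sigma\in\Sigma_r$, $z\xrightarrow{\sigma}z'$, there exist $x'$, $W'\in E$ with $x\xrightarrow{\sigma}x'$, $(x',z')\in W'$, $\mathit{match}_{G,R}(W,\sigma,W')$. *)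

From mathcomp Require Import all_boot.
Unset Printing Implicit Defensive.

Record automaton (Sigma : Type) := Automaton {
  state : Type;
  trans : state -> Sigma -> state -> Prop;
  init : state -> Prop;
  init_ne : exists q, init q
}.
Arguments state {Sigma} a.
Arguments trans {Sigma} a _ _ _.
Arguments init_ne {Sigma} a.
Arguments init {Sigma} a _.

Definition enabled {Sigma} (A : automaton Sigma) (q : state A) (s : Sigma) : Prop :=
  exists q', trans A q s q'.

Inductive reachable {Sigma} (A : automaton Sigma) : state A -> Prop :=
| reach_init q : init A q -> reachable A q
| reach_step q s q' : reachable A q -> trans A q s q' -> reachable A q'.

Definition sync {Sigma} (S G : automaton Sigma) : automaton Sigma.
Proof.
refine (@Automaton Sigma (state S * state G)
  (fun p s p' => trans S p.1 s p'.1 /\ trans G p.2 s p'.2)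
  (fun p => init S p.1 /\ init G p.2) _).
destruct (init_ne S) as [y Hy]; destruct (init_ne G) as [x Hx].
exists (y, x); split; assumption.
Defined.

Definition admissible {Sigma} (uc : Sigma -> Prop) (S G : automaton Sigma) : Prop :=
  forall (p : state (sync S G)) (s : Sigma), reachable (sync S G) p -> uc s ->
    enabled G p.2 s -> enabled (sync S G) p s.

Definition cc_simulation {Sigma} (r : Sigma -> Prop) (A1 A2 : automaton Sigma)
    (Phi : state A1 -> state A2 -> Prop) : Prop :=
  (forall q0, init A1 q0 -> exists p0, init A2 p0 /\ Phi q0 p0) /\
  (forall q p s q', Phi q p -> trans A1 q s q' -> exists p', trans A2 p s p' /\ Phi q' p') /\
  (forall q p s p', Phi q p -> r s -> trans A2 p s p' -> exists q', trans A1 q s q' /\ Phi q' p').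

Definition match_GR {Sigma} (G R : automaton Sigma)
    (W : state G -> state R -> Prop) (s : Sigma) (W' : state G -> state R -> Prop) : Prop :=
  forall x z x', W x z -> trans G x s x' -> exists z', trans R z s z' /\ W' x' z'.

Definition controllability_set {Sigma} (uc r : Sigma -> Prop) (G R : automaton Sigma)
    (E : (state G -> state R -> Prop) -> Prop) : Prop :=
  (exists W0, E W0 /\ forall x0, init G x0 -> exists z0, init R z0 /\ W0 x0 z0) /\
  (forall W s, E W -> uc s -> exists W', E W' /\ match_GR G R W s W') /\
  (forall W x z s z', E W -> W x z -> r s -> trans R z s z' ->
     exists x' W', trans G x s x' /\ E W' /\ W' x' z' /\ match_GR G R W s W').

Definition theta {Sigma} (S G R : automaton Sigma)
    (Phi : state (sync S G) -> state R -> Prop) (y : state S) : state G -> state R -> Prop :=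
  fun x z => Phi (y, x) z /\ reachable (sync S G) (y, x).

Definition E_of {Sigma} (S G R : automaton Sigma)
    (Phi : state (sync S G) -> state R -> Prop) : (state G -> state R -> Prop) -> Prop :=
  fun W => exists y : state S, W = theta S G R Phi y.

(* A supervisor move y -> y' lets the forward clause of Phi
   match every plant move out of theta_y inside theta_y'.  If S is blocked at y
   on an uncontrollable event, admissibility says no reachable (y, x) lets the
   plant move on it either, so matching holds vacuously.  A required event of R
   is answered by the backward clause of Phi, which yields a joint move
   (y, x) -> (y', x') and hence the target theta_y'. *)
From mathcomp Require Import all_boot.
From Stdlib Require Import Classical.

Section Theta.

Variables (Sigma : Type) (G R S : automaton Sigma).
Variable Phi : state (sync S G) -> state R -> Prop.

Notation theta := (theta S G R Phi).

Lemma reachable_sync_step y x s y' x' :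
  reachable (sync S G) (y, x) -> trans S y s y' -> trans G x s x' ->
  reachable (sync S G) (y', x').
Proof.
  intros Hreach Hy Hx.
  apply reach_step with (y, x) s; [assumption | split; assumption].
Qed.

Lemma theta_init y0 :
  (forall q0, init (sync S G) q0 -> exists p0, init R p0 /\ Phi q0 p0) ->
  init S y0 ->
  forall x0, init G x0 -> exists z0, init R z0 /\ theta y0 x0 z0.
Proof.
  intros Hinit Hy0 x0 Hx0.
  assert (Hq0 : init (sync S G) (y0, x0)) by (split; assumption).
  destruct (Hinit _ Hq0) as [z0 [Hz0 HPhi]].
  exists z0; split; [assumption | split; [assumption | apply reach_init; assumption]].
Qed.

Lemma match_theta_trans y s y' :
  (forall q p s q', Phi q p -> trans (sync S G) q s q' ->
     exists p', trans R p s p' /\ Phi q' p') ->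
  trans S y s y' -> match_GR G R (theta y) s (theta y').
Proof.
  intros Hfwd Hy x z x' [HPhi Hreach] Hx.
  assert (Hq : trans (sync S G) (y, x) s (y', x')) by (split; assumption).
  destruct (Hfwd _ _ _ _ HPhi Hq) as [z' [Hz HPhi']].
  exists z'; split; [assumption | split; [assumption |]].
  apply reachable_sync_step with y x s; assumption.
Qed.

Lemma match_theta_blocked (uc : Sigma -> Prop) y s W' :
  admissible uc S G -> uc s -> ~ enabled S y s ->
  match_GR G R (theta y) s W'.
Proof.
  intros Hadm Hs Hblocked x z x' [_ Hreach] Hx.
  exfalso; apply Hblocked.
  destruct (Hadm (y, x) s Hreach Hs (ex_intro _ x' Hx)) as [[y' x''] [Hy _]].
  exists y'; exact Hy.
Qed.

End Theta.

Theorem lemma4 (Sigma : finType) (uc r : Sigma -> Prop)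
    (G R S : automaton Sigma) (Phi : state (sync S G) -> state R -> Prop) :
  admissible uc S G ->
  cc_simulation r (sync S G) R Phi ->
  controllability_set uc r G R (E_of S G R Phi).
Proof.
  intros Hadm [Hinit [Hfwd Hbwd]].
  split; [| split].
  - destruct (init_ne S) as [y0 Hy0].
    exists (theta S G R Phi y0); split; [exists y0; reflexivity |].
    apply theta_init; assumption.
  - intros W s [y ->] Hs.
    destruct (classic (enabled S y s)) as [[y' Hy] | Hblocked].
    + exists (theta S G R Phi y'); split; [exists y'; reflexivity |].
      apply match_theta_trans; assumption.
    + exists (theta S G R Phi y); split; [exists y; reflexivity |].
      apply match_theta_blocked with uc; assumption.
  - intros W x z s z' [y ->] [HPhi Hreach] Hs Hz.
    destruct (Hbwd _ _ _ _ HPhi Hs Hz) as [[y' x'] [[Hy Hx] HPhi']].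
    exists x', (theta S G R Phi y').
    split; [assumption | split; [exists y'; reflexivity | split]].
    + split; [assumption | apply reachable_sync_step with y x s; assumption].
    + apply match_theta_trans with (y' := y'); assumption.
Qed.
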